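(* For all integers $n,d$ with $n\ge h$ and $0\le d\le\rho(m)-1$: \[ \sum_{i=0}^{\rho(m)-1}\mu_i\;\le\;\sum_{f=1}^h y(n-f)\;\le\;\rho(m)+\sum_{i=0}^{\rho(m)-1}\mu_i, \] and \[ \sum_{i=d+1}^{\rho(m)-1}\mu_i\;\le\;\sum_{f=1}^h w(n-f,d)\;\le\;\rho(m)-d-1+\sum_{i=0}^{\rho(m)-1}\mu_i . \]
   Context: For $u\in\mathbb{R}$ let $\mathbf 1[u]=1$ if $u\ge 0$ and $\mathbf 1[u]=0$ if $u<0$. Let $m$ be a positive integer and let $\rho(m)$ denote the number of primes $p$ with $2m<p<3m$; assume $\rho(m)\ge 2$. List these primes as $p_0>p_1>\dots>p_{\rho(m)-1}$ and put $\alpha_i=3m-p_i$. Let $k=(6m-1)\rho(m)$, $\mu_i=\lfloor k/p_i\rfloor$, $\beta_i=k-p_i\mu_i$. Define weights $\bar a_j$, $1\le j\le k$: if $\rho(m)$ is even, $\bar a_j=2$ if $j=\ell p_i$ for some $i$ and some $\ell$ with $1\le \ell\le 3\rho(m)/2$, $\bar a_j=-2$ if $j=\ell p_i$ with $3\rho(m)/2<\ell\le 2\rho(m)$, and $\bar a_j=0$ otherwise; if $\rho(m)$ is odd, $\bar a_j=2$ if $j=\ell p_i$ with $1\le\ell\le (3\rho(m)-1)/2$, $\bar a_j=-2$ if $j=\ell p_i$ with $(3\rho(m)+1)/2\le \ell\le 2\rho(m)-2$, $\bar a_j=-1$ if $j=\ell p_i$ with $\ell\in\{2\rho(m)-1,2\rho(m)\}$,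 and $\bar a_j=0$ otherwise (well defined since the sets $\{\ell p_i:1\le\ell\le2\rho(m)\}$ are pairwise disjoint). Let $\bar\theta=2\rho(m)$. For each $i$ define $x^{\alpha_i}(t)$ for $0\le t\le k-1$ by $x^{\alpha_i}(t)=1$ if $t=\beta_i+\ell p_i$ for some $0\le \ell\le\mu_i-1$ and $x^{\alpha_i}(t)=0$ otherwise, and for $t\ge k$ by $x^{\alpha_i}(t)=\mathbf 1\big[\sum_{j=1}^k \bar a_j x^{\alpha_i}(t-j)-\bar\theta\big]$. Let $h=\rho(m)k$. For $1\le f\le h$ let $b_f=\bar a_j$ if $f=\rho(m)j$ with $1\le j\le k$, and $b_f=0$ otherwise. Define $(y(n))_{n\ge0}$ by $y(\rho(m)j+i)=x^{\alpha_i}(1+j)$ for $0\le j\le k-1$, $0\le i\le\rho(m)-1$, and $y(n)=\mathbf 1\big[\sum_{f=1}^h b_f y(n-f)-\bar\theta\big]$ for $n\ge h$. Let $L_1(d)=\rho(m)\cdot\mathrm{lcm}(p_0,\dots,p_d)$ for $0\le d\le\rho(m)-1$. For $0\le d\le\rho(m)-1$ define $(w(n,d))_{n\ge0}$ by: for $0\le i\le d$, $w(\rho(m)j+i,d)=x^{\alpha_i}(1+j)$ for $0\le j\le k-2$ and $w(\rho(m)(k-1)+i,d)=1-x^{\alpha_i}(k)$; for $d+1\le i\le\rho(m)-1$ and $0\le j\le k-1$, $w(\rho(m)j+i,d)=y(\rho(m)j+i+L_1(d))$; and $w(n,d)=\mathbf 1\big[\sum_{f=1}^h b_f w(n-f,d)-\bar\theta\big]$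 for $n\ge h$. *)

From HB Require Import structures.
From mathcomp Require Import all_boot all_order all_algebra.
Set Implicit Arguments. Unset Strict Implicit. Unset Printing Implicit Defensive.
Import Order.TTheory GRing.Theory Num.Theory.
Local Open Scope ring_scope.
Local Open Scope nat_scope.

(* Primes p with 2m < p < 3m, listed in decreasing order p_0 > p_1 > ... *)
Definition primes_between (m : nat) : seq nat :=
  rev [seq p <- iota (2 * m).+1 (m.-1) | prime p].

Definition rho (m : nat) : nat := size (primes_between m).

Definition pr (m i : nat) : nat := nth 0 (primes_between m) i.

Definition kk (m : nat) : nat := (6 * m - 1) * rho m.
Definition mu (m i : nat) : nat := kk m %/ pr m i.
Definition beta (m i : nat) : nat := kk m %% pr m i.

(* weight attached to multiple l * p_i, 1 <= l <= 2 rho *)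
Definition wl (m l : nat) : int :=
  let r := rho m in
  if ~~ odd r then
    (if l <= (3 * r) %/ 2 then Posz 2 else (- Posz 2)%R)
  else
    (if l <= (3 * r - 1) %/ 2 then Posz 2
     else if l <= 2 * r - 2 then (- Posz 2)%R else (- Posz 1)%R).

Definition abar (m j : nat) : int :=
  let good := [seq i <- iota 0 (rho m) |
                 (pr m i %| j) && (0 < j %/ pr m i <= 2 * rho m)] in
  match good with
  | i :: _ => wl m (j %/ pr m i)
  | [::] => Posz 0
  end.

Definition theta (m : nat) : int := Posz (2 * rho m).

(* Generic threshold recursion with window K:
   s(t) = init t for t < K, and
   s(t) = 1[ sum_{j=1}^K a_j s(t-j) - th ] for t >= K. Values are 0/1 nats. *)
Fixpoint thr_build (K : nat) (a : nat -> int) (th : int) (init : nat -> nat)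
    (n : nat) : seq nat :=
  match n with
  | 0 => [::]
  | n'.+1 =>
      let s := thr_build K a th init n' in
      rcons s (if n' < K then init n'
               else nat_of_bool (th <= \sum_(1 <= j < K.+1) a j * Posz (nth 0 s (n' - j)))%R)
  end.

Definition thr_seq (K : nat) (a : nat -> int) (th : int) (init : nat -> nat)
    (t : nat) : nat :=
  nth 0 (thr_build K a th init t.+1) t.

Definition x_init (m i t : nat) : nat :=
  nat_of_bool [&& beta m i <= t, pr m i %| t - beta m i
                & (t - beta m i) %/ pr m i < mu m i].

Definition x (m i : nat) : nat -> nat :=
  thr_seq (kk m) (abar m) (theta m) (x_init m i).

Definition hh (m : nat) : nat := rho m * kk m.

Definition bw (m f : nat) : int :=
  if (rho m %| f) && (0 < f %/ rho m <= kk m) then abar m (f %/ rho m) else Posz 0.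

Definition y (m : nat) : nat -> nat :=
  thr_seq (hh m) (bw m) (theta m)
    (fun n => x m (n %% rho m) (1 + n %/ rho m)).

Definition L1 (m d : nat) : nat := rho m * \big[lcmn/1]_(i < d.+1) pr m i.

Definition w_init (m d n : nat) : nat :=
  let i := n %% rho m in
  let j := n %/ rho m in
  if i <= d then
    (if j <= kk m - 2 then x m i (1 + j) else 1 - x m i (kk m))
  else y m (n + L1 m d).

Definition w (m d : nat) : nat -> nat :=
  thr_seq (hh m) (bw m) (theta m) (w_init m d).

(* Write X_i(t) = [t = beta_i mod p_i] for the periodic indicator of the class of p_i.
   The heart of the proof is that X_i is a fixed point of the threshold recursion with
   weights abar: at time t >= k the weighted multiples l p_i (1 <= l <= 2 rho) of the own
   prime carry the full weight sum_l wl_l = theta exactly when X_i(t) = 1, while each other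
   prime p_i' meets the class of p_i at most once among its first 2 rho multiples (p_i does
   not divide l p_i'), contributing at most 2.  Hence x^{alpha_i} = X_i, and the truncation
   Z_i = X_i [t < k] is also a solution, which dies after time k since a proper suffix of the
   weights stays below theta.  The weights b spread abar along the multiples of rho, so the
   recursions for y and w decouple into rho interleaved copies: y(rho j + i) = X_i(1 + j),
   and w(rho j + i, d) is Z_i(1 + j) for i <= d and X_i(1 + j + lcm(p_0..p_d)) otherwise.
   Finally a window of h = rho k values splits into rho windows of length k = mu_i p_i + beta_i
   of these classes, containing mu_i or mu_i + 1 class points (at most mu_i for Z_i). *)

From HB Require Import structures.
From mathcomp Require Import all_boot all_order all_algebra zify.
Set Implicit Arguments. Unset Strict Implicit. Unset Printing Implicit Defensive.
Import Order.TTheory GRing.Theory Num.Theory.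

Definition conv (K : nat) (a : nat -> int) (s : nat -> nat) (t : nat) : int :=
  (\sum_(1 <= j < K.+1) a j * Posz (s (t - j)%N))%R.

Section ThresholdRecursion.
Variables (K : nat) (a : nat -> int) (th : int) (init : nat -> nat).

Lemma size_thr_build n : size (thr_build K a th init n) = n.
Proof. by elim: n => //= n IH; rewrite size_rcons IH. Qed.

Lemma nth_thr_build n t : t < n ->
  nth 0 (thr_build K a th init n) t = thr_seq K a th init t.
Proof.
elim: n => // n IH; rewrite ltnS leq_eqVlt => /orP[/eqP ->|ht] //.
by rewrite /= nth_rcons size_thr_build ht IH.
Qed.

Lemma thr_seqE t : thr_seq K a th init t =
  if t < K then init t else nat_of_bool (th <= conv K a (thr_seq K a th init) t)%R.
Proof.
rewrite /thr_seq /= nth_rcons size_thr_build ltnn eqxx.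
case: ifP => // hK; congr (nat_of_bool (_ <= _)%R); apply: eq_big_nat => j /andP[j1 j2].
by rewrite nth_thr_build //; lia.
Qed.

Lemma thr_seq_unique (s : nat -> nat) :
  (forall t, t < K -> s t = init t) ->
  (forall t, K <= t -> s t = nat_of_bool (th <= conv K a s t)%R) ->
  forall t, thr_seq K a th init t = s t.
Proof.
move=> s_init s_rec; elim/ltn_ind => t IH; rewrite thr_seqE.
case: ltnP => ht; first by rewrite s_init.
rewrite s_rec //; congr (nat_of_bool (_ <= _)%R); apply: eq_big_nat => j /andP[j1 j2].
by rewrite IH //; lia.
Qed.

End ThresholdRecursion.

Lemma big_if_eq (R : Type) (idx : R) (op : Monoid.law idx) (lo hi i0 : nat)
    (F : nat -> R) : lo <= i0 < hi ->
  \big[op/idx]_(lo <= i < hi) (if i == i0 then F i else idx) = F i0.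
Proof.
move=> /andP[h1 h2]; rewrite (@big_cat_nat _ _ _ i0) ?(ltnW h2) //= [X in op _ X]big_ltn // eqxx.
rewrite big_nat_cond big1 => [|i /andP[/andP[_ hi0] _]]; last by rewrite ltn_eqF.
rewrite Monoid.mul1m big_nat_cond big1 ?Monoid.mulm1 // => i /andP[/andP[hi0 _] _].
by rewrite gtn_eqF.
Qed.

Definition spread (r K : nat) (a : nat -> int) (f : nat) : int :=
  if (r %| f) && (0 < f %/ r <= K) then a (f %/ r) else Posz 0.

Lemma conv_spread (r K : nat) (a : nat -> int) (s : nat -> nat) (N : nat) : 0 < r ->
  conv (r * K) (spread r K a) s N = (\sum_(1 <= j < K.+1) a j * Posz (s (N - r * j)%N))%R.
Proof.
move=> r0; rewrite /conv.
have spreadE f : spread r K a f = (\sum_(1 <= j < K.+1) (if f == r * j then a j else 0))%R.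
  rewrite /spread; case: ifP => [/andP[hd hr]|hf].
    rewrite (eq_bigr (fun j => if j == f %/ r then a j else 0)) => [|j _].
      by rewrite big_if_eq //; lia.
    by rewrite -{1}(divnK hd) mulnC eqn_pmul2l // eq_sym.
  rewrite big_nat_cond big1 // => j /andP[/andP[l1 l2] _].
  by case: eqP => // hj; move: hf; rewrite hj dvdn_mulr // mulKn //; lia.
under eq_bigr do rewrite spreadE big_distrl.
rewrite exchange_big; apply: eq_big_nat => j /andP[j1 j2].
rewrite (eq_bigr (fun f => if f == r * j then a j * Posz (s (N - f)%N) else 0)%R).
  by rewrite big_if_eq //; apply/andP; split; [rewrite muln_gt0 r0 | rewrite ltnS leq_pmul2l].
by move=> f _; case: ifP => _; rewrite ?mul0r.
Qed.

Lemma divmod_sub r N j : 0 < r -> r * j <= N ->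
  (N - r * j) %% r = N %% r /\ (N - r * j) %/ r = N %/ r - j.
Proof.
move=> r0 hj; have hq : j <= N %/ r by rewrite leq_divRL // mulnC.
have e : N - r * j = (N %/ r - j) * r + N %% r.
  have hjr : j * r <= N %/ r * r by rewrite leq_mul2r hq orbT.
  rewrite mulnBl [r * j]mulnC {1}(divn_eq N r).
  by move: hjr; move: (N %/ r * r) (j * r) => u v; lia.
by rewrite e modnMDl divnMDl // modn_mod (divn_small (ltn_pmod N r0)) addn0.
Qed.

Lemma thr_seq_interleave (r K : nat) (a : nat -> int) (th : int) (init : nat -> nat)
    (S : nat -> nat -> nat) : 0 < r ->
  (forall N, N < r * K -> init N = S (N %% r) (1 + N %/ r)) ->
  (forall i t, i < r -> K < t -> S i t = nat_of_bool (th <= conv K a (S i) t)%R) ->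
  forall N, thr_seq (r * K) (spread r K a) th init N = S (N %% r) (1 + N %/ r).
Proof.
move=> r0 S_init S_rec; apply: thr_seq_unique => [N hN|N hN]; first by rewrite S_init.
have hK : K <= N %/ r by rewrite leq_divRL // mulnC.
rewrite conv_spread // [LHS]S_rec ?ltn_pmod // /conv.
congr (nat_of_bool (_ <= _)%R); apply: eq_big_nat => j /andP[j1 j2].
have hjN : r * j <= N by apply: leq_trans hN; rewrite leq_pmul2l //; lia.
have [e1 e2] := divmod_sub r0 hjN.
by rewrite e1 e2; congr (_ * Posz (S _ _))%R; lia.
Qed.

Definition resid (p c s : nat) : nat := s %% p == c.

Lemma sum_indicator_le1 lo hi (F : nat -> nat) : (forall i, F i <= 1) ->
  (forall i j, lo <= i < hi -> lo <= j < hi -> 0 < F i -> 0 < F j -> i = j) ->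
  \sum_(lo <= i < hi) F i <= 1.
Proof.
elim: hi => [|hi IH] F1 Funiq; first by rewrite big_geq.
case: (leqP lo hi) => hlo; last by rewrite big_geq.
rewrite big_nat_recr //=; case: (posnP (F hi)) => hF.
  by rewrite hF addn0 IH // => i j hi1 hj1; apply: Funiq; lia.
rewrite big_nat_cond big1 ?add0n ?F1 // => i /andP[hi1 _].
case: (posnP (F i)) => [//|hFi]; have := Funiq i hi ltac:(lia) ltac:(lia) hFi hF; lia.
Qed.

Lemma sum_window_cat (f : nat -> nat) T L1 L2 :
  \sum_(0 <= q < L1 + L2) f (T + q) =
  \sum_(0 <= q < L1) f (T + q) + \sum_(0 <= q < L2) f (T + L1 + q).
Proof.
elim: L2 => [|L2 IH]; first by rewrite addn0 [X in _ + X]big_geq // addn0.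
by rewrite addnS !big_nat_recr //= ?IH ?addnA //; lia.
Qed.

Section ResidueCounting.
Variables (p c : nat).
Hypothesis c_lt_p : c < p.

Let p_gt0 : 0 < p. Proof. exact: leq_ltn_trans c_lt_p. Qed.

(* Two points of the class [c] are at distance at least [p]. *)
Lemma resid_window_le1 T L : L <= p -> \sum_(0 <= q < L) resid p c (T + q) <= 1.
Proof.
move=> hL; apply: sum_indicator_le1 => [s|q1 q2 h1 h2]; first by rewrite /resid; case: eqP.
rewrite /resid !lt0b => /eqP e1 /eqP e2.
wlog lt12 : q1 q2 h1 h2 e1 e2 / q1 <= q2.
  by move=> H; case: (leqP q1 q2) => h; [exact: H | apply/esym/H => //; apply: ltnW].
case: (ltngtP q1 q2) lt12 => // lt12 _.
have : p %| q2 - q1.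
  have e : (T + q1 + (q2 - q1) == T + q1 + 0 %[mod p]).
    by rewrite addn0 -addnA subnKC ?e1 ?e2 // ltnW.
  by rewrite eqn_modDl mod0n in e.
by move/dvdn_leq; lia.
Qed.

Lemma resid_period T : \sum_(0 <= q < p) resid p c (T + q) = 1.
Proof.
apply/eqP; rewrite eqn_leq resid_window_le1 //=.
set q0 := (c + (p - T %% p)) %% p.
have q0p : q0 < p by rewrite ltn_pmod.
rewrite (@big_cat_nat _ _ _ q0) ?(ltnW q0p) //= [X in _ + X]big_ltn //.
suff -> : resid p c (T + q0) = 1 by rewrite addnCA leq_addr.
have hT : T = T %/ p * p + T %% p := divn_eq T p.
have hr : T %% p < p by rewrite ltn_pmod.
rewrite /resid /q0 modnDmr.
have -> : T + (c + (p - T %% p)) = (T %/ p).+1 * p + c by rewrite mulSn {1}hT; lia.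
by rewrite modnMDl modn_small ?eqxx.
Qed.

Lemma resid_periods u T : \sum_(0 <= q < u * p) resid p c (T + q) = u.
Proof.
elim: u T => [|u IH] T; first by rewrite mul0n big_geq.
by rewrite mulSn sum_window_cat resid_period IH add1n.
Qed.

Lemma resid_window u T :
  u <= \sum_(0 <= q < u * p + c) resid p c (T + q) <= u.+1.
Proof.
rewrite sum_window_cat resid_periods.
by have := resid_window_le1 (T + u * p) (ltnW c_lt_p); lia.
Qed.

(* Before time [K = u p + c] there are exactly [u] points of the class [c], so any window
   of length [K] contains at most [u] of them. *)
Lemma resid_before_window u T (K := u * p + c) :
  \sum_(0 <= q < K) ((T + q) %% p == c) && (T + q < K) <= u.
Proof.
set z := fun s => ((s %% p == c) && (s < K) : nat).
have prefix : \sum_(0 <= q < K) z (0 + q) = u.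
  rewrite sum_window_cat /z.
  rewrite (eq_big_nat _ _ (F2 := fun q => resid p c (0 + q))); last first.
    by move=> q /andP[_ hq]; rewrite /resid /K (leq_trans hq (leq_addr _ _)) andbT.
  rewrite resid_periods big_nat_cond big1 ?addn0 // => q /andP[/andP[_ hq] _].
  by rewrite add0n modnMDl modn_small ?ltn_eqF // (ltn_trans hq).
have after : \sum_(0 <= q < T) z (0 + K + q) = 0.
  by rewrite big_nat_cond big1 // => q _; rewrite /z -addnA leqNgt leq_addr andbF.
have := sum_window_cat z 0 T K; have := sum_window_cat z 0 K T.
rewrite addnC prefix after; rewrite /z add0n; lia.
Qed.

End ResidueCounting.

(* The first index [q] with [r q + i >= A]: the residue class [i] of a window starting at
   [A] begins at the [class_start r A i]-th multiple. *)
Definition class_start (r A i : nat) : nat := A %/ r + (i < A %% r).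

Lemma class_startS r A i : 0 < r -> i < r ->
  class_start r A.+1 i = class_start r A i + (i == A %% r).
Proof.
move=> r0 ir; rewrite /class_start.
have hA := divn_eq A r; have sr : A %% r < r by rewrite ltn_pmod.
move: hA sr; set a := A %/ r; set s := A %% r => hA sr; clearbody a s.
case: (ltnP s.+1 r) => hs.
  have -> : A.+1 = a * r + s.+1 by rewrite hA addnS.
  rewrite divnMDl // modnMDl divn_small // modn_small // addn0 ltnS leq_eqVlt.
  have [->|ne] := eqVneq i s; first by rewrite ltnn addn0 addn1.
  by rewrite addn0.
have -> : A.+1 = a.+1 * r by rewrite hA mulSn; lia.
rewrite mulnK // modnMl ltn0 addn0.
have [-> | ne] := eqVneq i s; first by rewrite ltnn addn0 addn1.
have -> : i < s by rewrite ltn_neqAle ne -ltnS (leq_trans ir hs).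
by rewrite addn0 addn1.
Qed.

Lemma sum_window_shift (G : nat -> nat) o K :
  \sum_(0 <= q < K) G (o.+1 + q) + G o = \sum_(0 <= q < K) G (o + q) + G (o + K).
Proof.
have h1 := sum_window_cat G o 1 K; have h2 := sum_window_cat G o K 1.
rewrite big_nat1 addn0 in h1; rewrite big_nat1 addn0 in h2.
by move: h1 h2; rewrite -[o.+1]addn1 (addnC K 1); lia.
Qed.

Lemma interleave_window0 (r K : nat) (F : nat -> nat -> nat) : 0 < r ->
  \sum_(0 <= N < r * K) F (N %% r) (N %/ r) = \sum_(i < r) \sum_(0 <= q < K) F i q.
Proof.
move=> r0; elim: K => [|K IH].
  by rewrite muln0 big_geq // big1 // => i _; rewrite big_geq.
rewrite mulnS addnC (@big_cat_nat _ _ _ (r * K)) ?leq_addr //= IH.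
rewrite -{1}[r * K]add0n big_addn addKn.
rewrite (eq_big_nat _ _ (F2 := fun q => F q K)); last first.
  move=> q /andP[_ hq]; rewrite addnC mulnC modnMDl divnMDl // modn_small //.
  by rewrite divn_small ?addn0.
by rewrite big_mkord -big_split /=; apply: eq_bigr => i _; rewrite big_nat_recr.
Qed.

Lemma interleave_window (r K A : nat) (F : nat -> nat -> nat) : 0 < r ->
  \sum_(A <= N < A + r * K) F (N %% r) (N %/ r) =
  \sum_(i < r) \sum_(0 <= q < K) F i (class_start r A i + q).
Proof.
move=> r0; case: (posnP K) => [->|K0].
  by rewrite muln0 addn0 big_geq // big1 // => i _; rewrite big_geq.
elim: A => [|A IH].
  rewrite add0n interleave_window0 //; apply: eq_bigr => i _.
  by apply: eq_bigr => q _; rewrite /class_start div0n mod0n ltn0.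
set g := fun N => F (N %% r) (N %/ r); set s := A %% r.
have sr : s < r by rewrite ltn_pmod.
have rK0 : 0 < r * K by rewrite muln_gt0 r0.
have lhs_step : \sum_(A.+1 <= N < A.+1 + r * K) g N + g A =
                \sum_(A <= N < A + r * K) g N + F s (class_start r A s + K).
  have gAK : g (A + r * K) = F s (class_start r A s + K).
    by rewrite /g mulnC addnC modnMDl divnMDl // /class_start ltnn addn0 addnC.
  rewrite addSn big_nat_recr /=; last by rewrite -addn1 leq_add2l.
  rewrite [in RHS]big_ltn; last by rewrite -{1}[A]addn0 ltn_add2l.
  by rewrite gAK; lia.
have gA : g A = F s (class_start r A s) by rewrite /g /class_start ltnn addn0.
have rhs_step : forall i : 'I_r,
  \sum_(0 <= q < K) F i (class_start r A.+1 i + q) + (if i == s :> nat then g A else 0) =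
  \sum_(0 <= q < K) F i (class_start r A i + q) +
    (if i == s :> nat then F s (class_start r A s + K) else 0).
  move=> i; rewrite class_startS //; case: eqP => [-> | _]; last by rewrite !addn0.
  by rewrite -/s addn1 gA sum_window_shift.
have sums : \sum_(i < r) _ = \sum_(i < r) _ := eq_bigr _ (fun i _ => rhs_step i).
rewrite !big_split /= -!(big_mkord xpredT (fun i => if i == s then _ else 0)) !big_if_eq // in sums.
by move: lhs_step; rewrite IH -sums => /eqP; rewrite eqn_add2r => /eqP.
Qed.

Section PrimesBetween.
Variable m : nat.
Hypothesis m_gt0 : 0 < m.

Lemma uniq_primes_between : uniq (primes_between m).
Proof. by rewrite /primes_between rev_uniq filter_uniq // iota_uniq. Qed.

Lemma rho_lt_m : rho m < m.
Proof.
rewrite /rho /primes_between size_rev size_filter.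
by apply: leq_ltn_trans (count_size _ _) _; rewrite size_iota; lia.
Qed.

Lemma pr_spec i : i < rho m -> [/\ prime (pr m i), 2 * m < pr m i & pr m i < 3 * m].
Proof.
move=> hi; have := mem_nth 0 hi; rewrite -/(pr m i) mem_rev mem_filter mem_iota.
by case/andP=> pp /andP[h1 h2]; split => //; lia.
Qed.

Lemma pr_inj i j : i < rho m -> j < rho m -> pr m i = pr m j -> i = j.
Proof. by move=> hi hj /eqP; rewrite nth_uniq ?uniq_primes_between // => /eqP. Qed.

Lemma pr_gt0 i : i < rho m -> 0 < pr m i.
Proof. by case/pr_spec => /prime_gt0. Qed.

Lemma beta_lt_pr i : i < rho m -> beta m i < pr m i.
Proof. by move=> hi; rewrite /beta ltn_pmod // pr_gt0. Qed.

Lemma kk_divE i : kk m = mu m i * pr m i + beta m i.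
Proof. exact: divn_eq. Qed.

Lemma two_rho_lt_pr i : i < rho m -> 2 * rho m < pr m i.
Proof. by move=> hi; have := rho_lt_m; case: (pr_spec hi) => _ h _; lia. Qed.

Lemma multiple_le_kk i l : i < rho m -> l <= 2 * rho m -> l * pr m i <= kk m.
Proof.
move=> hi hl; case: (pr_spec hi) => _ _ hp; rewrite /kk.
have hp' : pr m i <= 3 * m - 1 by lia.
apply: leq_trans (leq_mul hl hp') _; have := rho_lt_m; nia.
Qed.

Lemma pr_ndvd_cross i i' l : i < rho m -> i' < rho m -> i != i' ->
  0 < l <= 2 * rho m -> ~~ (pr m i %| l * pr m i').
Proof.
move=> hi hi' nii hl; case: (pr_spec hi) => pp _ _; case: (pr_spec hi') => pp' _ _.
rewrite Euclid_dvdM // (dvdn_prime2 pp pp') negb_or; apply/andP; split.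
  by apply/negP => /dvdn_leq h; have := two_rho_lt_pr hi; lia.
by apply/negP => /eqP /(pr_inj hi hi') /eqP; rewrite (negbTE nii).
Qed.

End PrimesBetween.

Local Open Scope ring_scope.

(* Closed form of the partial sums [sum_(l = 1..c) wl l] of the weights: they increase
   by 2 up to the turning point [3 rho / 2] and decrease afterwards. *)
Definition wl_psum (r c : nat) (od : bool) : int :=
  if ~~ od then (if (c <= (3 * r) %/ 2)%N then 2 * c%:Z else 6 * r%:Z - 2 * c%:Z)
  else (if (c <= (3 * r - 1) %/ 2)%N then 2 * c%:Z
        else if (c <= 2 * r - 2)%N then 2 * (3 * r%:Z - 1) - 2 * c%:Z
        else if (c == 2 * r - 1)%N then 2 * r%:Z + 1 else 2 * r%:Z).

Section Weights.
Variable m : nat.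
Hypothesis rho_ge2 : (2 <= rho m)%N.

Let rho_half : rho m = (2 * (rho m %/ 2) + odd (rho m))%N.
Proof. by rewrite {1}(divn_eq (rho m) 2) modn2; lia. Qed.

Lemma sum_wl_prefixE c : (c <= 2 * rho m)%N ->
  \sum_(1 <= l < c.+1) wl m l = wl_psum (rho m) c (odd (rho m)).
Proof.
elim: c => [|c IH] hc.
  by rewrite big_geq // /wl_psum; case: (odd (rho m)) rho_half => /= hr;
    repeat (case: ifP => ?); lia.
rewrite big_nat_recr //= IH; last lia.
by rewrite /wl_psum /wl; case: (odd (rho m)) rho_half => /= hr;
  repeat (case: ifP => ?); lia.
Qed.

Lemma sum_wl : \sum_(1 <= l < (2 * rho m).+1) wl m l = theta m.
Proof.
rewrite sum_wl_prefixE // /wl_psum /theta.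
by case: (odd (rho m)) rho_half => /= hr; repeat (case: ifP => ?); lia.
Qed.

Lemma sum_wl_prefix_gt0 c : (1 <= c <= 2 * rho m)%N -> 0 < \sum_(1 <= l < c.+1) wl m l.
Proof.
move=> hc; rewrite sum_wl_prefixE /wl_psum; last lia.
by case: (odd (rho m)) rho_half => /= hr; repeat (case: ifP => ?); lia.
Qed.

Lemma sum_wl_suffix_lt c : (1 <= c)%N ->
  \sum_(1 <= l < (2 * rho m).+1) (if (c < l)%N then wl m l else 0) < theta m.
Proof.
move=> hc; case: (leqP (2 * rho m) c) => hc2.
  rewrite big_nat_cond big1 /theta; first lia.
  by move=> l /andP[/andP[_ hl] _]; rewrite ltnNge (leq_trans _ hc2).
rewrite (@big_cat_nat _ _ _ c.+1) //=; last lia.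
rewrite big_nat_cond big1 ?add0r => [|l /andP[/andP[_ hl] _]]; last first.
  by rewrite ltnNge -ltnS hl.
rewrite (eq_big_nat _ _ (F2 := wl m)) => [|l /andP[hl _]]; last by rewrite hl.
have hp : (1 <= c <= 2 * rho m)%N by lia.
have := sum_wl; rewrite (@big_cat_nat _ _ _ c.+1) //=; last lia.
by move=> <-; rewrite -subr_gt0 addrK sum_wl_prefix_gt0.
Qed.

End Weights.

Lemma wl_le2 m l : wl m l <= 2.
Proof. by rewrite /wl; repeat case: ifP. Qed.

Definition weighted_multiple (m i j : nat) : bool :=
  ((pr m i %| j) && (0 < j %/ pr m i <= 2 * rho m))%N.

Section AbarDecomposition.
Variable m : nat.
Hypothesis m_gt0 : (0 < m)%N.

Lemma weighted_multiple_uniq j i1 i2 : (i1 < rho m)%N -> (i2 < rho m)%N ->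
  weighted_multiple m i1 j -> weighted_multiple m i2 j -> i1 = i2.
Proof.
move=> h1 h2 /andP[d1 r1] /andP[d2 r2]; apply/eqP; apply/negPn/negP => ne.
by have := pr_ndvd_cross m_gt0 h1 h2 ne r2; rewrite divnK // d1.
Qed.

Lemma sum_wl_at_multiple j i : (i < rho m)%N ->
  \sum_(1 <= l < (2 * rho m).+1) (if j == (l * pr m i)%N then wl m l else 0)
  = if weighted_multiple m i j then wl m (j %/ pr m i) else 0.
Proof.
move=> hi; have p0 := pr_gt0 m_gt0 hi; case: ifP => [/andP[hd hr] | hG].
  rewrite (eq_bigr (fun l => if l == (j %/ pr m i)%N then wl m l else 0)) => [|l _].
    by rewrite big_if_eq //; lia.
  by rewrite -{1}(divnK hd) eqn_pmul2r // eq_sym.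
rewrite big_nat_cond big1 // => l /andP[/andP[l1 l2] _].
by case: eqP => // hj; move: hG; rewrite /weighted_multiple hj dvdn_mull // mulnK //; lia.
Qed.

Lemma abar_as_sum j : abar m j =
  \sum_(i < rho m) \sum_(1 <= l < (2 * rho m).+1)
     (if j == (l * pr m i)%N then wl m l else 0).
Proof.
under eq_bigr do rewrite sum_wl_at_multiple //.
have mem_good i : (i \in [seq i <- iota 0 (rho m) | weighted_multiple m i j])
   = (i < rho m)%N && weighted_multiple m i j.
  by rewrite mem_filter mem_iota add0n andbC.
rewrite /abar -/(weighted_multiple m _ j).
case E: [seq i <- iota 0 (rho m) | _] mem_good => [|i0 s] mem_good.
  rewrite big1 // => i _; case: ifP => // hG.
  by have := mem_good i; rewrite in_nil ltn_ord hG.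
have := mem_good i0; rewrite mem_head => /esym/andP[hi0 hG0].
rewrite (bigD1 (Ordinal hi0)) //= hG0 big1 ?addr0 // => i /eqP ne.
case: ifP => // hG; case: ne; apply: val_inj => /=.
exact: (weighted_multiple_uniq (ltn_ord i) hi0 hG hG0).
Qed.

Lemma conv_abar (s : nat -> nat) t : conv (kk m) (abar m) s t =
  \sum_(i < rho m) \sum_(1 <= l < (2 * rho m).+1) wl m l * Posz (s (t - l * pr m i)%N).
Proof.
rewrite /conv; under eq_bigr do rewrite abar_as_sum big_distrl.
rewrite exchange_big; apply: eq_bigr => i _.
under eq_bigr do rewrite big_distrl.
rewrite exchange_big; apply: eq_big_nat => l /andP[l1 l2].
rewrite (eq_bigr (fun j => if j == (l * pr m i)%N then wl m l * Posz (s (t - j)%N) else 0)).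
  have hl : (l <= 2 * rho m)%N by rewrite -ltnS.
  rewrite big_if_eq // ltnS (multiple_le_kk m_gt0 (ltn_ord i) hl) andbT muln_gt0 l1.
  by rewrite (pr_gt0 m_gt0 (ltn_ord i)).
by move=> j _; case: ifP => _; rewrite ?mul0r.
Qed.

End AbarDecomposition.

(* The periodic indicator [X_i(t) = [t = beta_i mod p_i]], which will turn out to be
   [x^{alpha_i}], and its truncation [Z_i] to times before [k]. *)
Definition X (m i : nat) : nat -> nat := resid (pr m i) (beta m i).
Definition Z (m i s : nat) : nat := ((s %% pr m i == beta m i) && (s < kk m))%N.

Lemma Z_le_X m i s : (Z m i s <= X m i s)%N.
Proof. by rewrite /Z /X /resid; case: (_ == _); case: (s < kk m)%N. Qed.

Lemma X_le1 m i s : (X m i s <= 1)%N.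
Proof. by rewrite /X /resid; case: (_ == _). Qed.

Lemma X_gt0 m i s : (0 < X m i s)%N -> X m i s = 1%N.
Proof. by move=> hs; apply/eqP; rewrite eqn_leq X_le1. Qed.

Section FixedPoint.
Variable m : nat.
Hypotheses (m_gt0 : (0 < m)%N) (rho_ge2 : (2 <= rho m)%N).

Let multiple_le_t i l t : (i < rho m)%N -> (l <= 2 * rho m)%N -> (kk m <= t)%N ->
  (l * pr m i <= t)%N.
Proof. by move=> hi hl ht; exact: leq_trans (multiple_le_kk m_gt0 hi hl) ht. Qed.

Lemma X_sub_own i l t : (l * pr m i <= t)%N -> X m i (t - l * pr m i) = X m i t.
Proof. by move=> h; rewrite /X /resid -{2}(subnK h) addnC modnMDl. Qed.

Lemma X_cross_gap i i' l a : (i < rho m)%N -> (i' < rho m)%N -> i != i' ->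
  (0 < l <= 2 * rho m)%N -> X m i a = 1%N -> X m i (a + l * pr m i') = 0%N.
Proof.
move=> hi hi' ne hl; rewrite /X /resid => /eqP; rewrite eqb1 => /eqP ea.
apply/eqP; rewrite eqb0; apply/negP => /eqP eb.
have : (a + l * pr m i' == a + 0 %[mod pr m i]) by rewrite addn0 ea eb.
rewrite eqn_modDl mod0n => hdvd.
by have := pr_ndvd_cross m_gt0 hi hi' ne hl; rewrite /dvdn hdvd.
Qed.

Lemma X_cross_le1 i i' t : (i < rho m)%N -> (i' < rho m)%N -> i != i' ->
  (kk m <= t)%N -> (\sum_(1 <= l < (2 * rho m).+1) X m i (t - l * pr m i') <= 1)%N.
Proof.
move=> hi hi' ne ht; apply: sum_indicator_le1 => [s|]; first exact: X_le1.
suff gap u v : (1 <= u < (2 * rho m).+1)%N -> (1 <= v < (2 * rho m).+1)%N -> (u < v)%N ->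
    (0 < X m i (t - u * pr m i'))%N -> (0 < X m i (t - v * pr m i'))%N -> False.
  move=> u v hu hv xu xv; case: (ltngtP u v) => // [uv | vu]; exfalso.
    exact: (gap u v).
  exact: (gap v u).
move=> hu hv uv /X_gt0 xu /X_gt0 xv.
have e : (t - v * pr m i' + (v - u) * pr m i' = t - u * pr m i')%N.
  have hvt : (v * pr m i' <= t)%N by apply: multiple_le_t; lia.
  by rewrite mulnBl addnBA ?leq_mul2r ?(ltnW uv) ?orbT // subnK.
have hvu : (0 < v - u <= 2 * rho m)%N by lia.
by have := X_cross_gap hi hi' ne hvu xv; rewrite e xu.
Qed.

Lemma cross_weight_le2 i i' t (F : nat -> nat) : (i < rho m)%N -> (i' < rho m)%N ->
  i != i' -> (kk m <= t)%N -> (forall s, F s <= X m i s)%N ->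
  \sum_(1 <= l < (2 * rho m).+1) wl m l * Posz (F (t - l * pr m i')%N) <= 2.
Proof.
move=> hi hi' ne ht hF.
apply: le_trans (_ : \sum_(1 <= l < (2 * rho m).+1) 2 * Posz (X m i (t - l * pr m i')%N) <= _).
  apply: ler_sum => l _; apply: le_trans (ler_wpM2r _ (wl_le2 m l)) _ => //.
  by rewrite ler_pM2l // lez_nat hF.
rewrite -mulr_sumr -(big_morph Posz PoszD (erefl (Posz 0))).
by rewrite -[X in _ <= X]mulr1 ler_pM2l // lez_nat X_cross_le1.
Qed.

Lemma cross_terms0 i i' t l (F : nat -> nat) : (i < rho m)%N -> (i' < rho m)%N ->
  i != i' -> (kk m <= t)%N -> (0 < l <= 2 * rho m)%N -> (forall s, F s <= X m i s)%N ->
  X m i t = 1%N -> F (t - l * pr m i')%N = 0%N.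
Proof.
move=> hi hi' ne ht hl hF xt; apply/eqP; rewrite -leqn0 (leq_trans (hF _)) //.
case: (posnP (X m i (t - l * pr m i'))) => [-> // | /X_gt0 xl].
have hlt : (l * pr m i' <= t)%N by apply: multiple_le_t; lia.
by have := X_cross_gap hi hi' ne hl xl; rewrite subnK // xt.
Qed.

(* Outside the class of [p_i], a sequence dominated by [X_i] stays below the threshold:
   its own multiples contribute nothing and each other prime at most 2. *)
Lemma conv_below_theta i t (F : nat -> nat) : (i < rho m)%N -> (kk m <= t)%N ->
  (forall s, F s <= X m i s)%N -> X m i t = 0%N -> conv (kk m) (abar m) F t < theta m.
Proof.
move=> hi ht hF xt; rewrite conv_abar // (bigD1 (Ordinal hi)) //= big_nat_cond big1 ?add0r.
  apply: le_lt_trans (_ : \sum_(i' < rho m | i' != Ordinal hi) (2 : int) < _).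
    apply: ler_sum => i' ne; apply: (cross_weight_le2 (i := i)) => //.
    by apply: contra ne => /eqP e; apply/eqP/val_inj.
  rewrite sumr_const cardC1 card_ord /theta.
  by case: (rho m) rho_ge2 => // r _ /=; rewrite -mulr_natr; lia.
move=> l /andP[/andP[_ hl] _]; have := hF (t - l * pr m i)%N.
rewrite X_sub_own ?xt; last by apply: multiple_le_t; lia.
by rewrite leqn0 => /eqP ->; rewrite mulr0.
Qed.

Lemma conv_on_class i t (F : nat -> nat) : (i < rho m)%N -> (kk m <= t)%N ->
  (forall s, F s <= X m i s)%N -> X m i t = 1%N ->
  conv (kk m) (abar m) F t =
  \sum_(1 <= l < (2 * rho m).+1) wl m l * Posz (F (t - l * pr m i)%N).
Proof.
move=> hi ht hF xt; rewrite conv_abar // (bigD1 (Ordinal hi)) //=.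
rewrite [X in _ + X]big1 ?addr0 // => i' ne.
rewrite big_nat_cond big1 // => l /andP[/andP[l1 l2] _].
rewrite (cross_terms0 (i := i)) ?mulr0 //; last lia.
by apply: contra ne => /eqP e; apply/eqP/val_inj.
Qed.

Lemma X_rec i t : (i < rho m)%N -> (kk m <= t)%N ->
  X m i t = nat_of_bool (theta m <= conv (kk m) (abar m) (X m i) t).
Proof.
move=> hi ht; case: (posnP (X m i t)) => [xt | /X_gt0 xt].
  by rewrite xt; apply/esym/eqP; rewrite eqb0 -ltNge (conv_below_theta hi).
rewrite xt (conv_on_class hi) //.
rewrite (eq_big_nat _ _ (F2 := wl m)) ?sum_wl ?lexx // => l /andP[_ hl].
by rewrite X_sub_own ?xt ?mulr1 //; apply: multiple_le_t; lia.
Qed.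

Lemma X_class_after_kk i t : (i < rho m)%N -> (kk m <= t)%N -> X m i t = 1%N ->
  exists c, (t = kk m + c * pr m i)%N.
Proof.
move=> hi ht xt; exists ((t - kk m) %/ pr m i)%N; rewrite divnK ?subnKC //.
have e : (kk m + (t - kk m) == kk m + 0 %[mod pr m i])%N.
  by rewrite subnKC // addn0; move: xt; rewrite /X /resid /beta => /eqP; rewrite eqb1.
by rewrite eqn_modDl mod0n in e.
Qed.

(* [Z_i] solves it too after time [k], where it vanishes: at a point [t = k + c p_i] of
   the class, only the multiples [l > c] are seen, a proper suffix of the weights. *)
Lemma Z_rec i t : (i < rho m)%N -> (kk m < t)%N ->
  Z m i t = nat_of_bool (theta m <= conv (kk m) (abar m) (Z m i) t).
Proof.
move=> hi ht; have ht' := ltnW ht.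
have -> : Z m i t = 0%N by rewrite /Z ltnNge ht' andbF.
apply/esym/eqP; rewrite eqb0 -ltNge.
case: (posnP (X m i t)) => [xt | /X_gt0 xt]; first exact: conv_below_theta hi ht' (Z_le_X m i) xt.
rewrite (conv_on_class hi) //; last exact: Z_le_X.
have p0 := pr_gt0 m_gt0 hi.
have [c tc] := X_class_after_kk hi ht' xt.
have c1 : (1 <= c)%N by case: c tc ht => [|c] tc ht //; lia.
rewrite (eq_big_nat _ _ (F2 := fun l => if (c < l)%N then wl m l else 0)).
  exact: sum_wl_suffix_lt.
move=> l /andP[l1 l2]; have hl : (l * pr m i <= t)%N by apply: multiple_le_t; lia.
have xl : ((t - l * pr m i) %% pr m i == beta m i)%N.
  by have := X_sub_own hl; rewrite xt /X /resid => /eqP; rewrite eqb1.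
rewrite /Z xl /=.
have -> : (t - l * pr m i < kk m)%N = (c < l)%N.
  rewrite -[(c < l)%N](ltn_pmul2r p0); move: hl; rewrite tc.
  by move: (c * pr m i)%N (l * pr m i)%N => a b; lia.
by case: ifP; rewrite ?mulr1 ?mulr0.
Qed.

End FixedPoint.

Local Close Scope ring_scope.

(* The initial segment of [x^{alpha_i}] is [X_i]: below [k = mu_i p_i + beta_i] the points
   [beta_i + l p_i], [l < mu_i], are exactly those of the class of [p_i]. *)
Lemma x_init_X m i t : 0 < m -> i < rho m -> t < kk m -> x_init m i t = X m i t.
Proof.
move=> hm hi ht; have p0 := pr_gt0 hm hi; have bp := beta_lt_pr hm hi.
rewrite /x_init /X /resid; congr nat_of_bool; apply/idP/idP.
  case/and3P => h1 /divnK h2 _.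
  by rewrite -(subnK h1) -h2 modnMDl modn_small.
move/eqP => tb; have e : t = t %/ pr m i * pr m i + beta m i by rewrite -tb -divn_eq.
rewrite e leq_addl addnK dvdn_mull //= mulnK // -(ltn_pmul2r p0).
by move: ht; rewrite (kk_divE m i) {1}e ltn_add2r.
Qed.

Lemma x_closed m i t : 0 < m -> 2 <= rho m -> i < rho m -> x m i t = X m i t.
Proof.
move=> hm hr hi; apply: thr_seq_unique => [s hs|s hs]; first by rewrite x_init_X.
exact: X_rec.
Qed.

Lemma y_closed m N : 0 < m -> 2 <= rho m -> y m N = X m (N %% rho m) (1 + N %/ rho m).
Proof.
move=> hm hr; have r0 : 0 < rho m by lia.
apply: (thr_seq_interleave (S := X m)) => // [M hM|i t hi ht].
  by rewrite x_closed // ltn_pmod.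
by apply: X_rec => //; apply: ltnW.
Qed.

Definition lcm_pr (m d : nat) : nat := \big[lcmn/1]_(i < d.+1) pr m i.

Definition w_class (m d i t : nat) : nat :=
  if i <= d then Z m i t else X m i (t + lcm_pr m d).

Lemma w_closed m d N : 0 < m -> 2 <= rho m ->
  w m d N = w_class m d (N %% rho m) (1 + N %/ rho m).
Proof.
move=> hm hr; have r0 : 0 < rho m by lia.
apply: (thr_seq_interleave (S := w_class m d)) => // [M hM|i t hi ht].
  have hj : M %/ rho m < kk m by rewrite ltn_divLR // mulnC.
  rewrite /w_init /w_class; case: ifP => hd.
    have k2 : 2 <= kk m by rewrite /kk; nia.
    case: ifP => hj2; rewrite x_closed ?ltn_pmod // /Z /X /resid.
      by rewrite (_ : 1 + M %/ rho m < kk m) ?andbT //; lia.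
    by rewrite (_ : 1 + M %/ rho m = kk m) ?ltnn ?andbF /beta ?eqxx //; lia.
  rewrite y_closed // /L1 -/(lcm_pr m d) mulnC addnC modnMDl divnMDl //.
  by congr (X _ _ _); lia.
rewrite /w_class; case: ifP => hd; first exact: Z_rec.
rewrite X_rec ?leq_addr //; last by apply: leq_trans (ltnW ht) (leq_addr _ _).
congr (nat_of_bool (_ <= _)%R); apply: eq_big_nat => j /andP[_ hj].
by congr (_ * Posz (X _ _ _))%R; lia.
Qed.

Lemma backward_window_interleave r K n (F : nat -> nat -> nat) : 0 < r -> r * K <= n ->
  \sum_(1 <= f < (r * K).+1) F ((n - f) %% r) ((n - f) %/ r) =
  \sum_(i < r) \sum_(0 <= q < K) F i (class_start r (n - r * K) i + q).
Proof.
move=> r0 hn; rewrite -interleave_window // subnK //.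
elim: (r * K) hn => [|H IH] hH; first by rewrite !big_geq ?subn0.
rewrite big_nat_recr //= IH; last lia.
by rewrite [RHS]big_ltn ?subnSK ?leq_subr // addnC; lia.
Qed.

Lemma X_window m i T : 0 < m -> i < rho m ->
  mu m i <= \sum_(0 <= q < kk m) X m i (T + q) <= (mu m i).+1.
Proof. by move=> hm hi; rewrite (kk_divE m i); apply: resid_window; apply: beta_lt_pr. Qed.

Lemma Z_window m i T : 0 < m -> i < rho m -> \sum_(0 <= q < kk m) Z m i (T + q) <= mu m i.
Proof.
by move=> hm hi; rewrite /Z (kk_divE m i); apply: resid_before_window; apply: beta_lt_pr.
Qed.

Lemma sum_ord_above (F : nat -> nat) r d : d < r ->
  \sum_(i < r) (if d < i then F i else 0) = \sum_(d.+1 <= i < r) F i.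
Proof.
move=> dr; rewrite -(big_mkord xpredT (fun i => if d < i then F i else 0)).
rewrite (@big_cat_nat _ _ _ d.+1) //= big_nat_cond big1 ?add0n.
  by apply: eq_big_nat => i /andP[-> _].
by move=> i /andP[/andP[_ hi] _]; rewrite ltnNge -ltnS hi.
Qed.

Lemma y_window m n : 0 < m -> 2 <= rho m -> hh m <= n ->
  \sum_(1 <= f < (hh m).+1) y m (n - f) =
  \sum_(i < rho m) \sum_(0 <= q < kk m) X m i (1 + class_start (rho m) (n - hh m) i + q).
Proof.
move=> hm hr hn; have r0 : 0 < rho m by lia.
rewrite (eq_bigr (fun f => X m ((n - f) %% rho m) (1 + (n - f) %/ rho m))) => [|f _];
  last exact: y_closed.
by rewrite (backward_window_interleave (fun i q => X m i (1 + q))).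
Qed.

Lemma w_window m d n : 0 < m -> 2 <= rho m -> hh m <= n ->
  \sum_(1 <= f < (hh m).+1) w m d (n - f) =
  \sum_(i < rho m) \sum_(0 <= q < kk m) w_class m d i (1 + class_start (rho m) (n - hh m) i + q).
Proof.
move=> hm hr hn; have r0 : 0 < rho m by lia.
rewrite (eq_bigr (fun f => w_class m d ((n - f) %% rho m) (1 + (n - f) %/ rho m))) => [|f _];
  last exact: w_closed.
by rewrite (backward_window_interleave (fun i q => w_class m d i (1 + q))).
Qed.

Lemma w_class_window m d i T : 0 < m -> i < rho m ->
  (if d < i then mu m i else 0) <= \sum_(0 <= q < kk m) w_class m d i (T + q)
    <= mu m i + (d < i).
Proof.
move=> hm hi; rewrite /w_class; case: leqP => hdi /=; first by rewrite addn0 Z_window.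
rewrite addn1 (eq_bigr (fun q => X m i (T + lcm_pr m d + q))) => [|q _].
  exact: X_window.
by rewrite addnAC.
Qed.

Theorem lemma14 (m : nat) (hm : 0 < m) (hrho : 2 <= rho m) (n d : nat)
  (hn : hh m <= n) (hd : d <= rho m - 1) :
  (\sum_(i < rho m) mu m i <= \sum_(1 <= f < (hh m).+1) y m (n - f)
     <= rho m + \sum_(i < rho m) mu m i)%N /\
  (\sum_(d.+1 <= i < rho m) mu m i <= \sum_(1 <= f < (hh m).+1) w m d (n - f)
     <= rho m - d - 1 + \sum_(i < rho m) mu m i)%N.
Proof.
set cs := class_start (rho m) (n - hh m).
have sum_add (F G : nat -> nat) :
  \sum_(i < rho m) (F i + G i) = \sum_(i < rho m) G i + \sum_(i < rho m) F i.
  by rewrite big_split addnC.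
split.
  rewrite y_window //; apply/andP; split.
    by apply: leq_sum => i _; case/andP: (X_window (1 + cs i) hm (ltn_ord i)).
  apply: leq_trans (_ : \sum_(i < rho m) (mu m i + 1) <= _).
    by apply: leq_sum => i _; rewrite addn1; case/andP: (X_window (1 + cs i) hm (ltn_ord i)).
  by rewrite (sum_add _ (fun _ => 1)) sum1_card card_ord.
have above1 : \sum_(i < rho m) (d < i) = rho m - d - 1.
  rewrite (eq_bigr (fun i : 'I_(rho m) => if d < i then 1 else 0)) => [|i _].
    by rewrite (sum_ord_above (fun _ => 1)) ?sum_nat_const_nat; lia.
  by case: (d < i).
rewrite w_window // -above1 -(sum_add (mu m) (fun i => nat_of_bool (d < i))).
rewrite -sum_ord_above; last lia.
by apply/andP; split; apply: leq_sum => i _;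
  case/andP: (w_class_window d (1 + cs i) hm (ltn_ord i)).
Qed.
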